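(* Let $\tau>\frac{3+\sqrt{17}}{2}$. Then for (Lebesgue) almost every $\gamma>0$, the set $D_{\gamma,\tau}$ is a Cantor set.
   Context: For $x\in\mathbb{R}$, $\|x\|:=\min_{p\in\mathbb{Z}}|x-p|$. Let $\mathbb{N}=\{1,2,3,\dots\}$. For $\gamma>0$ and $\tau\ge 1$, $D_{\gamma,\tau}:=\{\alpha\in(0,1):\ \|q\alpha\|\ge \gamma/q^{\tau}\ \text{for all } q\in\mathbb{N}\}$. A set $X\subset\mathbb{R}$ is a Cantor set if it is closed, totally disconnected and perfect (every point of $X$ is an accumulation point of $X$). *)

From HB Require Import structures.
From mathcomp Require Import all_boot all_order all_algebra.
From mathcomp Require Import all_classical all_reals all_analysis.
Set Implicit Arguments. Unset Strict Implicit. Unset Printing Implicit Defensive.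
Import Order.TTheory GRing.Theory Num.Theory.
Import numFieldNormedType.Exports.
Local Open Scope classical_set_scope.
Local Open Scope ring_scope.

(* ||x|| := min_{p in Z} |x - p| (the minimum is attained; we use inf). *)
Definition dist_int {R : realType} (x : R) : R :=
  inf [set `|x - p%:~R| | p in [set: int]].

Definition Dset {R : realType} (gamma tau : R) : set R :=
  [set alpha | 0 < alpha < 1 /\
     forall q : nat, (0 < q)%N ->
       gamma / (q%:R `^ tau) <= dist_int (q%:R * alpha)].

Definition cantor_set {R : realType} (X : set R) : Prop :=
  closed X /\ totally_disconnected X /\ X `<=` limit_point X.

From HB Require Import structures.
From mathcomp Require Import all_boot all_order all_algebra.
From mathcomp Require Import all_classical all_reals all_analysis.
From mathcomp Require Import ring lra.
Import Order.TTheory GRing.Theory Num.Theory.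
Import numFieldNormedType.Exports.
Local Open Scope classical_set_scope.
Local Open Scope ring_scope.
Set Implicit Arguments. Unset Strict Implicit. Unset Printing Implicit Defensive.

(* D_gamma is closed, being cut out by the closed conditions |q a - p| >= gamma / q^tau
   (the case q = 1 keeps it inside [gamma, 1 - gamma]), and totally disconnected, since it
   contains no rational.  Perfectness rests on one fact, which only needs tau >= 3: for
   gamma < c, every point a of D_c is a limit point of D_gamma.  Next to a, at distance
   between W and 2W with W of order 1/M^2, take an interval of length W on the side away
   from the at most one fraction p/q with q < M that is close to a; the conditions for
   q < M are then inherited from a, while those for q >= M exclude a set of measure at most
   sum_{q >= M} (q W + O(1)) gamma / q^(tau + 1) < W, so a point of D_gamma survives.
   Consequently, if a is isolated in D_gamma, a rational interval I meeting D_gamma only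
   in a determines gamma: were I also to meet D_gamma' only in a', with gamma < gamma',
   then a' would lie in D_gamma and I, so a' = a, a limit point of D_gamma.  Hence the
   exceptional gamma form a countable, thus Lebesgue-null, set. *)

Section DiophantineSets.
Context {R : realType}.
Implicit Types (a b c g tau x : R) (M : nat).

Definition diophantine_from M c tau x :=
  forall q : nat, (M <= q)%N -> forall p : int,
    c / q%:R `^ tau <= `|q%:R * x - p%:~R|.

Lemma le_dist_int a x : a <= dist_int x <-> forall p : int, a <= `|x - p%:~R|.
Proof.
have ne : [set `|x - p%:~R| | p in [set: int]] !=set0 by exists `|x - 0%:~R|, 0.
split=> [ax p|axp]; last by apply: lb_le_inf => // _ [p _ <-].
by apply: le_trans ax (ge_inf _ _); [exists 0 => _ [z _ <-] | exists p].
Qed.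

Lemma DsetP c tau x : Dset c tau x <-> 0 < x < 1 /\ diophantine_from 1 c tau x.
Proof.
by split=> -[x01 dx]; split=> // q q0; [apply/le_dist_int/dx | apply/le_dist_int/dx].
Qed.

Lemma diophantine_from_le M g c tau x :
  g <= c -> diophantine_from M c tau x -> diophantine_from M g tau x.
Proof.
move=> gc dx q Mq p; apply: le_trans (dx q Mq p).
by rewrite ler_wpM2r // invr_ge0 powR_ge0.
Qed.

Lemma DsetS g c tau : g <= c -> Dset c tau `<=` Dset g tau.
Proof.
by move=> gc x /DsetP[x01 dx]; apply/DsetP; split=> //; exact: diophantine_from_le dx.
Qed.

Lemma Dset_itv c tau x : Dset c tau x -> c <= x <= 1 - c.
Proof.
move=> /DsetP[/andP[x0 x1] dx]; have := dx 1%N isT 0; have := dx 1%N isT 1.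
rewrite mulr1n powR1 divr1 mul1r subr0 rmorph1 ltr0_norm ?subr_lt0 // gtr0_norm //.
by move=> *; apply/andP; split; lra.
Qed.

Lemma closed_diophantine_from M c tau :
  (0 < M)%N -> closed [set x | diophantine_from M c tau x].
Proof.
move=> M0 x clx q Mq p; apply/ler_addgt0Pr => e e0.
have q0 : 0 < q%:R :> R by rewrite ltr0n (leq_trans M0).
have [y [dy /= xy]] := clx _ (nbhsx_ballx x (e / q%:R) (divr_gt0 e0 q0)).
apply: le_trans (dy q Mq p) _.
have -> : q%:R * y - p%:~R = (q%:R * x - p%:~R) + q%:R * (y - x) by ring.
apply: le_trans (ler_normD _ _) _; rewrite lerD2l normrM gtr0_norm // distrC.
by rewrite -ler_pdivlMl // mulrC ltW // -ball_normE.
Qed.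

Lemma Dset_closed g tau : 0 < g -> closed (Dset g tau).
Proof.
move=> g0; suff -> : Dset g tau = `[g, 1 - g] `&` [set x | diophantine_from 1 g tau x].
  by apply: closedI; [exact: itv_closed | exact: closed_diophantine_from].
apply/seteqP; split=> x; rewrite /= in_itv /=.
  by move=> Dx; split; [exact: Dset_itv Dx | case/DsetP: Dx].
by case=> /andP[gx x1g] dx; apply/DsetP; split=> //; apply/andP; split; lra.
Qed.

Lemma not_diophantine_from1_ratr c tau (r : rat) :
  0 < c -> ~ diophantine_from 1 c tau (ratr r).
Proof.
move=> c0 dr; have := dr `|denq r|%N _ (numq r).
rewrite absz_gt0 denq_neq0 natr_absz gtr0_norm ?denq_gt0 // => /(_ isT).
rewrite /ratr [(denq r)%:~R * _]mulrC divfK ?intr_eq0 ?denq_neq0 // subrr normr0.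
by rewrite leNgt divr_gt0 // powR_gt0 // ltr0z denq_gt0.
Qed.

Lemma Dset_totally_disconnected g tau : 0 < g -> totally_disconnected (Dset g tau).
Proof.
move=> g0 x Dx; rewrite eqEsubset; split=> [y [C [Cx CD cC] Cy]|_ ->]; last first.
  exact: connected_component_refl.
have no_pair a b : C a -> C b -> a < b -> False.
  move=> Ca Cb ab; have [r] := rat_in_itvoo ab; rewrite in_itv /= => /andP[ar rb].
  have /CD/DsetP[_] : C (ratr r).
    by apply: ((connected_intervalP C).1 cC a b Ca Cb); rewrite !ltW.
  exact: not_diophantine_from1_ratr.
by case: (ltgtP x y) => [xy|yx|->] //; [case: (no_pair x y) | case: (no_pair y x)].
Qed.
End DiophantineSets.

Section ApproximationIntervals.
Context {R : realType}.
Local Notation mu := (@lebesgue_measure R).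

Definition approx_itv (q : nat) (p : int) (r : R) : set R :=
  `](p%:~R - r) / q%:R, (p%:~R + r) / q%:R[.

Lemma approx_itvP (q : nat) (p : int) r x : (0 < q)%N ->
  approx_itv q p r x <-> `|q%:R * x - p%:~R| < r.
Proof.
move=> q0; have qR : 0 < q%:R :> R by rewrite ltr0n.
rewrite /approx_itv /= in_itv /= ltr_pdivrMr // ltr_pdivlMr // ltr_norml.
by split=> /andP[h1 h2]; apply/andP; split; lra.
Qed.

Lemma lebesgue_measure_approx_itv (q : nat) (p : int) r : (0 < q)%N -> 0 < r ->
  mu (approx_itv q p r) = (2 * r / q%:R)%:E.
Proof.
move=> q0 r0; have qR : 0 < q%:R :> R by rewrite ltr0n.
rewrite lebesgue_measure_itv /= lte_fin ltr_pM2r ?invr_gt0 // ltrD2l gtrN //.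
by rewrite -EFinD; congr EFin; field; rewrite gt_eqF.
Qed.

(* Only the integers p = floor (q a - r) + k, k <= q W + 2 r + 1, can satisfy
   |q x - p| < r for some x in [a, a + W]. *)
Definition approx_cover (q : nat) (a W r : R) : set R :=
  \big[setU/set0]_(k < (Num.truncn (q%:R * W + 2 * r + 1)).+1)
    approx_itv q (Num.floor (q%:R * a - r) + k%:Z) r.

Lemma approx_cover_sub (q : nat) (p : int) a b W r :
  (0 < q)%N -> a <= b <= a + W -> `|q%:R * b - p%:~R| < r -> approx_cover q a W r b.
Proof.
move=> q0 /andP[ab bW] bp; have qR : 0 < q%:R :> R by rewrite ltr0n.
set p0 := Num.floor (q%:R * a - r).
have qab : q%:R * a <= q%:R * b by rewrite ler_pM2l.
have qbW : q%:R * b <= q%:R * a + q%:R * W by rewrite -mulrDr ler_pM2l.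
have [p0_le p0_gt] := (floor_le (q%:R * a - r), floorD1_gt (q%:R * a - r)).
rewrite -/p0 rmorphD /= in p0_gt.
move: bp; rewrite ltr_norml => /andP[bp1 bp2].
have p0p : p0 <= p by rewrite -(ler_int R); lra.
have pE : p = p0 + `|p - p0|%N by rewrite abszE ger0_norm ?subr_ge0 // addrCA subrr addr0.
rewrite /approx_cover -(bigcup_mkord _ (fun k => approx_itv q (p0 + k%:Z) r)).
exists `|p - p0|%N; last by apply/approx_itvP => //; rewrite -pE ltr_norml bp1.
rewrite /= -(ltr_nat R) natr_absz ger0_norm ?subr_ge0 // rmorphB /=.
by apply: lt_trans (truncnS_gt _); lra.
Qed.

Lemma lebesgue_measure_approx_cover_le (q : nat) a W r : (0 < q)%N -> 0 <= W -> 0 < r ->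
  (mu (approx_cover q a W r) <= ((q%:R * W + 2 * r + 2) * (2 * r / q%:R))%:E)%E.
Proof.
move=> q0 W0 r0; set X := q%:R * W + 2 * r + 1; set K := (Num.truncn X).+1.
apply: le_trans (content_subadditive mu
  (F := fun k => approx_itv q (Num.floor (q%:R * a - r) + k%:Z) r) (n := K) _ _ _) _ => //.
- by move=> k _; exact: measurable_itv.
- by apply: bigsetU_measurable => k _; exact: measurable_itv.
rewrite (eq_bigr (fun=> (2 * r / q%:R)%:E)); last first.
  by move=> k _; exact: lebesgue_measure_approx_itv.
rewrite sumEFin sumr_const card_ord lee_fin -(mulr_natl _ K).
rewrite ler_wpM2r ?divr_ge0 ?mulr_ge0 ?ler0n ?(ltW r0) //.
have : (Num.truncn X)%:R <= X by rewrite truncn_le !addr_ge0 ?mulr_ge0 ?ler0n // ltW.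
by rewrite /K mulrSr /X; lra.
Qed.

End ApproximationIntervals.

Section MeasureEstimate.
Context {R : realType}.

Lemma approx_mass_le (g W m x r : R) : 0 < g -> 0 <= W -> 2 <= m <= x -> 0 <= r <= g / x ^+ 3 ->
  (x * W + 2 * r + 2) * (2 * r / x) <=
    (2 * g * W / m + 2 * g * (2 * g + 2) / m ^+ 2) / ((x - 1) * x).
Proof.
move=> g0 W0 /andP[m2 mx] /andP[r0 rx].
have x0 : 0 < x by lra.
have x1 : 0 < x - 1 by lra.
have r_le_g : r <= g.
  apply: le_trans rx _; rewrite ler_pdivrMr ?exprn_gt0 // ler_peMr ?(ltW g0) //.
  by rewrite exprn_ege1 //; lra.
have rx4 : 2 * r / x <= 2 * g / x ^+ 4.
  rewrite ler_pdivrMr // (_ : 2 * g / x ^+ 4 * x = 2 * (g / x ^+ 3)); first lra.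
  by field; rewrite gt_eqF.
apply: le_trans (_ : (x * W + (2 * g + 2)) * (2 * g / x ^+ 4) <= _).
  have xW : 0 <= x * W by rewrite mulr_ge0 // ltW.
  by apply: ler_pM => //; rewrite ?divr_ge0; lra.
set C := 2 * g + 2.
have div_anti (A u v : R) : 0 <= A -> 0 < u -> u <= v -> A / v <= A / u.
  by move=> A0 u0 uv; apply: ler_wpM2l => //; rewrite lef_pV2 ?posrE // (lt_le_trans u0 uv).
have -> : (x * W + C) * (2 * g / x ^+ 4) = 2 * g * W / x ^+ 3 + 2 * g * C / x ^+ 4.
  by field; rewrite gt_eqF.
have -> : (2 * g * W / m + 2 * g * C / m ^+ 2) / ((x - 1) * x) =
    2 * g * W / (m * ((x - 1) * x)) + 2 * g * C / (m ^+ 2 * ((x - 1) * x)).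
  by field; rewrite !gt_eqF //; lra.
have gW : 0 <= 2 * g * W by rewrite !mulr_ge0 // ltW.
have gC : 0 <= 2 * g * C by rewrite /C !mulr_ge0 //; lra.
have xx1 : 0 < (x - 1) * x by rewrite mulr_gt0.
have xx1_le : (x - 1) * x <= x ^+ 2 by rewrite expr2 ler_wpM2r ?ltW //; lra.
apply: lerD; apply: div_anti => //; rewrite ?mulr_gt0 ?exprn_gt0 //; try lra.
  by rewrite exprSr mulrC; apply: ler_pM => //; lra.
rewrite (_ : 4 = 2 + 2)%N // exprD.
by apply: ler_pM => //; [exact: sqr_ge0 | exact: ltW | rewrite ler_sqr ?nnegrE; lra].
Qed.

Lemma nneseries_telescope_le (D : R) (M : nat) : 0 <= D -> (2 <= M)%N ->
  (\sum_(0 <= k <oo) (D / (((k + M)%:R - 1) * (k + M)%:R))%:E <= (D / (M%:R - 1))%:E)%E.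
Proof.
move=> D0 M2; pose u k := D / ((k + M)%:R - 1).
have gt1 k : 1 < (k + M)%:R :> R by rewrite ltr1n (leq_trans M2) ?leq_addl.
have u_ge0 k : 0 <= u k by rewrite divr_ge0 // subr_ge0 ltW.
have uE k : D / (((k + M)%:R - 1) * (k + M)%:R) = - u k.+1 - - u k.
  rewrite /u addSn mulrSr addrK; have := gt1 k.
  by move=> ?; field; rewrite !gt_eqF //; lra.
apply: lime_le.
  apply: is_cvg_nneseries => k _ _; have := gt1 k.
  by rewrite lee_fin => ?; rewrite divr_ge0 // mulr_ge0 //; lra.
apply: nearW => n; rewrite sumEFin lee_fin (telescope_sumr_eq (fun k => - u k)) //.
  by rewrite opprK addrC; have := u_ge0 n; rewrite /u add0n; lra.
Qed.

Lemma natr_exp3_le_powR (tau : R) (q : nat) : 3 <= tau -> (0 < q)%N ->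
  q%:R ^+ 3 <= q%:R `^ tau.
Proof.
by move=> t3 q0; rewrite -powR_mulrn ?ler0n // ler_powR // ler1n.
Qed.

Local Notation mu := (@lebesgue_measure R).

Lemma exists_diophantine_from_in_itv (g tau W a : R) (M : nat) :
  3 <= tau -> 0 < g -> 0 < W -> (2 <= M)%N ->
  (2 * g * W / M%:R + 2 * g * (2 * g + 2) / M%:R ^+ 2) / (M%:R - 1) < W ->
  exists2 b, a <= b <= a + W & diophantine_from M g tau b.
Proof.
move=> t3 g0 W0 M2 small; apply: contrapT => nob.
set D := 2 * g * W / M%:R + 2 * g * (2 * g + 2) / M%:R ^+ 2.
pose r (q : nat) := g / q%:R `^ tau.
pose F k := approx_cover (k + M) a W (r (k + M)%N).
have q_gt0 k : (0 < k + M)%N by rewrite ltn_addl // (leq_trans _ M2).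
have cover : `[a, a + W] `<=` \bigcup_k F k.
  move=> b; rewrite /= in_itv /= => ab.
  have : ~ diophantine_from M g tau b by move=> db; apply: nob; exists b.
  move=> /existsNP[q /not_implyP[Mq /existsNP[p /negP]]]; rewrite -ltNge => bp.
  exists (q - M)%N => //; rewrite /F subnK //.
  by apply: (@approx_cover_sub _ q p) => //; exact: leq_trans (ltnW M2) Mq.
have muF k : (mu (F k) <= (D / (((k + M)%:R - 1) * (k + M)%:R))%:E)%E.
  have qR : 0 < (k + M)%:R :> R by rewrite ltr0n.
  have r_gt0 : 0 < r (k + M)%N by rewrite divr_gt0 ?powR_gt0.
  have r_le : r (k + M)%N <= g / (k + M)%:R ^+ 3.
    rewrite ler_wpM2l ?(ltW g0) // lef_pV2 ?posrE ?powR_gt0 ?exprn_gt0 //.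
    exact: natr_exp3_le_powR.
  apply: le_trans (lebesgue_measure_approx_cover_le a (q_gt0 k) (ltW W0) r_gt0) _.
  rewrite lee_fin; apply: approx_mass_le; rewrite ?(ltW W0) ?r_le ?(ltW r_gt0) //.
  by rewrite !ler_nat M2 leq_addl.
have mF k : measurable (F k).
  by apply: bigsetU_measurable => j _; exact: measurable_itv.
have muI : mu (`[a, a + W]%classic : set R) = W%:E.
  by rewrite lebesgue_measure_itv /= lte_fin ltrDl W0 -EFinD addrAC subrr add0r.
have mI : measurable (`[a, a + W]%classic : set R) by exact: measurable_itv.
have D0 : 0 <= D by rewrite /D; apply: addr_ge0; apply: divr_ge0; rewrite ?exprn_ge0 //; nra.
have : (W%:E <= (D / (M%:R - 1))%:E)%E.
  rewrite -muI; apply: le_trans (measure_sigma_subadditive mu mF mI cover) _.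
  apply: le_trans (nneseries_telescope_le D0 M2).
  by apply: lee_nneseries => [k _ _|k _]; [exact: measure_ge0 | exact: muF].
by rewrite lee_fin leNgt small.
Qed.

End MeasureEstimate.

Section Perturbation.
Context {R : realType}.

Lemma close_approx_of_violation (tau c g W a b : R) (q : nat) (p : int) :
  0 < g < c -> (0 < q)%N ->
  c / q%:R `^ tau <= `|q%:R * a - p%:~R| -> `|b - a| <= 2 * W ->
  `|q%:R * b - p%:~R| < g / q%:R `^ tau ->
  `|q%:R * a - p%:~R| < (2 * g / (c - g) + 2) * W * q%:R.
Proof.
move=> /andP[g0 gc] q0 ca ba gb; have qR : 0 < q%:R :> R by rewrite ltr0n.
set v := (q%:R `^ tau)^-1; have v0 : 0 < v by rewrite invr_gt0 powR_gt0.
have tri : `|q%:R * a - p%:~R| <= `|q%:R * b - p%:~R| + q%:R * (2 * W).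
  have -> : q%:R * a - p%:~R = (q%:R * b - p%:~R) - q%:R * (b - a) by ring.
  by rewrite (le_trans (ler_normB _ _)) // lerD2l normrM gtr0_norm // ler_pM2l.
have cg : 0 < c - g by rewrite subr_gt0.
have gv : g * v <= g * (2 * W * q%:R / (c - g)).
  rewrite ler_pM2l // ler_pdivlMr // mulrC; move: ca gb; rewrite -/v; lra.
have -> : (2 * g / (c - g) + 2) * W * q%:R = g * (2 * W * q%:R / (c - g)) + 2 * W * q%:R.
  by field; rewrite gt_eqF.
by move: gb; rewrite -/v; lra.
Qed.

Lemma close_fractions_eq (a e : R) (M q q' : nat) (p p' : int) :
  0 < e -> 2 * e * M%:R ^+ 2 <= 1 -> (q < M)%N -> (q' < M)%N ->
  `|q%:R * a - p%:~R| < e * q%:R -> `|q'%:R * a - p'%:~R| < e * q'%:R ->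
  p * q'%:Z = p' * q%:Z.
Proof.
move=> e0 eM qM q'M qa q'a; apply/eqP; rewrite -subr_eq0 -absz_eq0 -leqn0 -ltnS.
rewrite -(ltr_nat R) natr_absz intr_norm.
have -> : ((p * q'%:Z - p' * q%:Z)%:~R : R) =
    q%:R * (q'%:R * a - p'%:~R) - q'%:R * (q%:R * a - p%:~R).
  by rewrite rmorphB /= !rmorphM /= !pmulrn; ring.
have [qR q'R] : q%:R < M%:R :> R /\ q'%:R < M%:R :> R by rewrite !ltr_nat.
have qq' : q%:R * q'%:R < M%:R ^+ 2 :> R.
  by rewrite expr2 ltr_pM ?ler0n.
apply: le_lt_trans (ler_normB _ _) _; rewrite !normrM !normr_nat.
have h1 : q%:R * `|q'%:R * a - p'%:~R| <= q%:R * (e * q'%:R).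
  by apply: ler_wpM2l; rewrite ?ler0n // ltW.
have h2 : q'%:R * `|q%:R * a - p%:~R| <= q'%:R * (e * q%:R).
  by apply: ler_wpM2l; rewrite ?ler0n // ltW.
have : 2 * e * (q%:R * q'%:R) < 2 * e * M%:R ^+ 2 by rewrite ltr_pM2l ?mulr_gt0.
by rewrite mulr1n; lra.
Qed.

Lemma exists_one_sided_itv (al e W : R) (M : nat) :
  0 < e -> 0 < W -> 2 * e * M%:R ^+ 2 <= 1 ->
  exists a, forall b, a <= b <= a + W ->
    W <= `|b - al| <= 2 * W /\
    (forall (q : nat) (p : int), (q < M)%N -> `|q%:R * al - p%:~R| < e * q%:R ->
      `|q%:R * al - p%:~R| <= `|q%:R * b - p%:~R|).
Proof.
move=> e0 W0 eM.
(* By close_fractions_eq, all fractions p/q with q < M that are (e q)-close to al lie on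
   the same side of al: the interval is taken on the other side. *)
have q_gt0 (q : nat) (p : int) : `|q%:R * al - p%:~R| < e * q%:R -> 0 < q%:R :> R.
  by move=> /(le_lt_trans (normr_ge0 _)); rewrite pmulr_rgt0.
case: (pselect (exists q p, [/\ (q < M)%N, `|q%:R * al - p%:~R| < e * q%:R
                              & p%:~R < q%:R * al])) => [[q0 [p0 [q0M close0 below]]]|above].
- exists (al + W) => b /andP[b1 b2]; split; first by rewrite ger0_norm; lra.
  move=> q p qM close; have qR := q_gt0 _ _ close; have q0R := q_gt0 _ _ close0.
  have E : p%:~R * q0%:R = p0%:~R * q%:R :> R.
    have := congr1 (fun z : int => z%:~R : R) (close_fractions_eq e0 eM qM q0M close close0).
    by rewrite /= !intrM.
  have pq : p%:~R < q%:R * al.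
    by rewrite -(ltr_pM2r q0R) E -mulrA (mulrC al) mulrA [p0%:~R * _]mulrC -mulrA ltr_pM2l.
  have qb : q%:R * al <= q%:R * b by rewrite ler_pM2l //; lra.
  by rewrite !ger0_norm; lra.
exists (al - 2 * W) => b /andP[b1 b2]; split; first by rewrite ler0_norm; lra.
move=> q p qM close; have qR := q_gt0 _ _ close.
have pq : q%:R * al <= p%:~R by rewrite leNgt; apply/negP => pq; apply: above; exists q, p.
have qb : q%:R * b <= q%:R * al by rewrite ler_pM2l //; lra.
by rewrite !ler0_norm; lra.
Qed.

End Perturbation.

Section LimitPoints.
Context {R : realType}.

Lemma diophantine_from1_of_one_sided (tau g c al b W : R) (M : nat) :
  0 < g < c -> diophantine_from 1 c tau al -> `|b - al| <= 2 * W ->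
  (forall (q : nat) (p : int), (q < M)%N ->
     `|q%:R * al - p%:~R| < (2 * g / (c - g) + 2) * W * q%:R ->
     `|q%:R * al - p%:~R| <= `|q%:R * b - p%:~R|) ->
  diophantine_from M g tau b -> diophantine_from 1 g tau b.
Proof.
move=> gc dal ba side db q q0 p; case: (leqP M q) => [Mq|qM]; first exact: db.
rewrite leNgt; apply/negP => viol.
have := le_lt_trans (side q p qM (close_approx_of_violation gc q0 (dal q q0 p) ba viol)) viol.
have : g / q%:R `^ tau < c / q%:R `^ tau.
  by case/andP: gc => _ gc; rewrite ltr_pM2r ?invr_gt0 ?powR_gt0 ?ltr0n.
by have := dal q q0 p; lra.
Qed.

Lemma gap_width_small (g A : R) (M : nat) :
  0 < g -> 1 <= A -> (2 <= M)%N -> 1 + g + 4 * g * (2 * g + 2) * A < M%:R ->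
  let W := (2 * A * M%:R ^+ 2)^-1 in
  2 * W <= M%:R^-1 /\
  (2 * g * W / M%:R + 2 * g * (2 * g + 2) / M%:R ^+ 2) / (M%:R - 1) < W.
Proof.
move=> g0 A1 M2 MB W; set m := M%:R.
have m2 : 2 <= m by rewrite /m ler_nat.
have W0 : 0 < W by rewrite invr_gt0 !mulr_gt0 ?exprn_gt0 //; lra.
split.
  have -> : 2 * W = (A * m ^+ 2)^-1 by rewrite /W; field; rewrite !gt_eqF //; lra.
  rewrite lef_pV2 ?posrE ?mulr_gt0 ?exprn_gt0 //; try lra.
  by rewrite expr2 mulrA ler_peMl ?mulr_ge0 //; nra.
have -> : (2 * g * W / m + 2 * g * (2 * g + 2) / m ^+ 2) / (m - 1)
    = W * ((2 * g / m + 4 * g * (2 * g + 2) * A) / (m - 1)).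
  by rewrite /W; field; rewrite !gt_eqF //; lra.
rewrite -[ltRHS]mulr1 ltr_pM2l // ltr_pdivrMr ?mul1r; last lra.
suff : 2 * g / m <= g by lra.
by rewrite ler_pdivrMr ?[2 * g]mulrC ?ler_pM2l //; lra.
Qed.

Lemma Dset_limit_point (tau g c al : R) :
  3 <= tau -> 0 < g < c -> Dset c tau al -> limit_point (Dset g tau) al.
Proof.
move=> t3 gc /DsetP[/andP[al0 al1] dal] U /nbhs_ballP[eps /= eps0 epsU].
have [g0 cg] := andP gc.
set A := 2 * g / (c - g) + 2.
have A1 : 1 <= A.
  have : 0 <= 2 * g / (c - g) by rewrite divr_ge0 //; lra.
  by rewrite /A; lra.
set B := 1 + g + 4 * g * (2 * g + 2) * A + eps^-1 + al^-1 + (1 - al)^-1.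
(* W = 1/(2 A M^2) is small enough for at most one fraction with denominator < M to be
   close to al (close_fractions_eq), and large enough not to be covered by the
   neighbourhoods of the fractions with denominators >= M (gap_width_small). *)
set M := (Num.truncn B).+2.
have MB : B < M%:R by rewrite /M mulrS; have := truncnS_gt B; lra.
have ie : 0 < eps^-1 by rewrite invr_gt0.
have ia : 0 < al^-1 by rewrite invr_gt0.
have ia' : 0 < (1 - al)^-1 by rewrite invr_gt0 subr_gt0.
have gA : 0 <= 4 * g * (2 * g + 2) * A by rewrite !mulr_ge0 //; lra.
have MB' : 1 + g + 4 * g * (2 * g + 2) * A < M%:R by rewrite /B in MB; lra.
have [W2 small] := gap_width_small g0 A1 (isT : (2 <= M)%N) MB'.
set W := (2 * A * M%:R ^+ 2)^-1 in W2 small.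
have W0 : 0 < W by rewrite invr_gt0 !mulr_gt0 ?exprn_gt0 ?ltr0n //; lra.
have W_lt d : 0 < d -> d^-1 < M%:R -> 2 * W < d.
  by move=> d0 dM; apply: le_lt_trans W2 _; rewrite invf_plt ?posrE ?ltr0n.
have eM : 2 * (A * W) * M%:R ^+ 2 <= 1.
  by rewrite /W mulrA mulrAC mulfV // gt_eqF // !mulr_gt0 ?exprn_gt0 ?ltr0n //; lra.
have [a side] := exists_one_sided_itv al (mulr_gt0 (lt_le_trans ltr01 A1) W0) W0 eM.
have [b ab db] := exists_diophantine_from_in_itv a t3 g0 W0 (isT : (2 <= M)%N) small.
have [/andP[Wb b2W] side_b] := side b ab.
have [We Wal Wal'] : [/\ 2 * W < eps, 2 * W < al & 2 * W < 1 - al].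
  by split; apply: W_lt; rewrite ?subr_gt0 //; rewrite /B in MB; lra.
exists b; split.
- by apply/eqP => bal; move: Wb; rewrite bal subrr normr0; lra.
- apply/DsetP; split; last exact: diophantine_from1_of_one_sided gc dal b2W side_b db.
  by move: b2W; rewrite ler_norml => /andP[? ?]; apply/andP; split; lra.
- by apply: epsU; rewrite -ball_normE /= distrC; lra.
Qed.

End LimitPoints.

Section Isolation.
Context {R : realType}.
Variable tau : R.

Definition isolates (g : R) (I : rat * rat) :=
  exists al, Dset g tau `&` `]ratr I.1, ratr I.2[ = [set al].

Lemma isolates_of_not_limit_point g al :
  Dset g tau al -> ~ limit_point (Dset g tau) al -> exists I, isolates g I.
Proof.
move=> Dal /existsNP[U /not_implyP[/nbhs_ballP[e /= e0 eU] noU]].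
have [r1] : exists r : rat, ratr r \in `]al - e, al[ by apply: rat_in_itvoo; lra.
have [r2] : exists r : rat, ratr r \in `]al, al + e[ by apply: rat_in_itvoo; lra.
rewrite !in_itv /= => /andP[al_r2 r2e] /andP[er1 r1_al].
exists (r1, r2), al; apply/seteqP; split=> [y [Dy]|_ ->]; last first.
  by split=> //; rewrite /= in_itv /= r1_al al_r2.
rewrite /= in_itv /= => /andP[r1y yr2]; apply: contrapT => yal; apply: noU.
exists y; split=> //; first exact/eqP.
by apply: eU; rewrite -ball_normE /= ltr_norml; apply/andP; split; lra.
Qed.

Hypothesis tau_ge3 : 3 <= tau.

Lemma isolates_inj g1 g2 I : 0 < g1 -> 0 < g2 -> isolates g1 I -> isolates g2 I -> g1 = g2.
Proof.
wlog g12 : g1 g2 / g1 < g2.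
  move=> wlog g1_0 g2_0 i1 i2.
  by case: (ltgtP g1 g2) => // [g12|g21]; [exact: wlog | apply/esym; exact: wlog].
move=> g1_0 _ [a1 E1] [a2 E2].
have [D2a2 Ia2] : (Dset g2 tau `&` `]ratr I.1, ratr I.2[) a2 by rewrite E2.
have a21 : a2 = a1.
  have : (Dset g1 tau `&` `]ratr I.1, ratr I.2[) a2 by split=> //; exact: DsetS (ltW g12) _ D2a2.
  by rewrite E1.
have g12' : 0 < g1 < g2 by rewrite g1_0 g12.
have I_nbhs : nbhs a2 `]ratr I.1, ratr I.2[%classic.
  by apply: open_nbhs_nbhs; split=> //; exact: itv_open.
have [y [ya2 D1y Iy]] := Dset_limit_point tau_ge3 g12' D2a2 I_nbhs.
have : (Dset g1 tau `&` `]ratr I.1, ratr I.2[) y by [].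
by rewrite E1 -a21 => /eqP; rewrite (negbTE ya2).
Qed.

End Isolation.

Lemma countable_lebesgue_negligible {R : realType} (A : set R) :
  countable A -> (@lebesgue_measure R).-negligible A.
Proof.
move=> cA; exists A; split=> //; last exact: countable_lebesgue_measure0.
by apply: countable_measurable => // x; exact: measurable_set1.
Qed.

Theorem mainTheorem1 (R : realType) (tau : R) :
  (3 + Num.sqrt 17) / 2 < tau ->
  {ae (@lebesgue_measure R), forall gamma : R, 0 < gamma -> cantor_set (Dset gamma tau)}.
Proof.
move=> tau_gt; have tau_ge3 : 3 <= tau.
  have := sqr_sqrtr (ler0n R 17); have := sqrtr_ge0 (17 : R); nra.
pose gamma_of (I : rat * rat) := xget 0 [set g | 0 < g /\ isolates tau g I].
apply: (negligibleS _ (countable_lebesgue_negligible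
  (sub_countable (card_image_le gamma_of setT) (countableP _)))).
move=> g /not_implyP[g0 not_cantor].
have /existsNP[al /not_implyP[Dal not_lp]] : ~ (Dset g tau `<=` limit_point (Dset g tau)).
  move=> perfect; apply: not_cantor; split; first exact: Dset_closed.
  by split=> //; exact: Dset_totally_disconnected.
have [I iso] := isolates_of_not_limit_point Dal not_lp.
exists I => //; apply: xget_unique => //= g' [g'0 iso'].
exact: isolates_inj tau_ge3 _ _ _ g'0 g0 iso' iso.
Qed.
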